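(* Let $K=\mathbb{Q}(\alpha,i)$ where $\alpha$ is a root of $x^3-93x+124$ (field $\Gamma_1$), of $x^3-129x-344$ (field $\Gamma_4$), or of $x^3-21x-28$ (field $\Omega_1$); let $F=\mathbb{Q}(\alpha)$ and $\rho$ complex conjugation. Let $\mathfrak{p}$ be a prime of $F$ above $2$ and $\mathfrak{P}$ the prime of $K$ above $\mathfrak{p}$ (one has $\mathfrak{p}\mathcal{O}_K=\mathfrak{P}^2$), and let $\chi_{\mathfrak{p}}:F_{\mathfrak{p}}^\times\to\{\pm1\}$ be the quadratic character associated with $K_{\mathfrak{P}}/F_{\mathfrak{p}}$. Then there exists a homomorphism $\widetilde{\chi_{\mathfrak{P}}}:\mathcal{O}_{K_{\mathfrak{P}}}^\times\to\{\pm1,\pm i\}$ such that $\widetilde{\chi_{\mathfrak{P}}}|_{\mathcal{O}_{F_{\mathfrak{p}}}^\times}=\chi_{\mathfrak{p}}|_{\mathcal{O}_{F_{\mathfrak{p}}}^\times}$, $\widetilde{\chi_{\mathfrak{P}}}(i)=i$, and $\widetilde{\chi_{\mathfrak{P}}}(x^\rho)=\widetilde{\chi_{\mathfrak{P}}}(x)^\rho$ for all $x\in\mathcal{O}_{K_{\mathfrak{P}}}^\times$.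
   Context: $K$ is a CM field cyclic of degree 6 over $\mathbb{Q}$ with cubic subfield $F$; $2$ splits completely in $F$ and each prime of $F$ above $2$ ramifies in $K$, so $\rho$ fixes $\mathfrak{P}$ and acts on $K_{\mathfrak{P}}$. *)

(* Local fields are handled abstractly: the completion K_P is
   any complete discretely-valued field L with a dense embedding of K. *)
From HB Require Import structures.
From mathcomp Require Import all_boot all_order all_algebra all_field.
Set Implicit Arguments. Unset Strict Implicit. Unset Printing Implicit Defensive.
Import Order.TTheory GRing.Theory Num.Theory.
Local Open Scope ring_scope.

(* v : L -> int is a (discrete, additively written) valuation on L^x;
   the value at 0 is irrelevant (0 has valuation +oo). *)
Definition is_dval (L : fieldType) (v : L -> int) : Prop :=
  (forall x y : L, x != 0 -> y != 0 -> v (x * y) = v x + v y) /\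
  (forall x y : L, x != 0 -> y != 0 -> x + y != 0 ->
     Num.min (v x) (v y) <= v (x + y)).

Definition vge (L : fieldType) (v : L -> int) (x : L) (n : int) : Prop :=
  x = 0 \/ n <= v x.

Definition vcomplete (L : fieldType) (v : L -> int) : Prop :=
  forall u : nat -> L,
    (forall n : int, exists N : nat, forall m k : nat,
        (N <= m)%N -> (N <= k)%N -> vge v (u m - u k) n) ->
    exists l : L, forall n : int, exists N : nat, forall m : nat,
        (N <= m)%N -> vge v (u m - l) n.

Definition vdense (K L : fieldType) (v : L -> int) (iota : K -> L) : Prop :=
  forall (x : L) (n : int), exists y : K, vge v (x - iota y) n.

Definition vclosure (L : fieldType) (v : L -> int) (S : L -> Prop) (x : L) : Prop :=
  forall n : int, exists y : L, S y /\ vge v (x - y) n.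

Definition vunit (L : fieldType) (v : L -> int) (x : L) : Prop :=
  x != 0 /\ v x = 0.

Definition generated_by (K : fieldType) (a j : K) : Prop :=
  forall x : K, exists c : 'I_3 -> 'I_2 -> rat,
    x = \sum_(k < 3) \sum_(l < 2) ratr (c k l) * a ^+ k * j ^+ l.

Definition in_Qa (K : fieldType) (a x : K) : Prop :=
  exists c : 'I_3 -> rat, x = \sum_(k < 3) ratr (c k) * a ^+ k.

From HB Require Import structures.
From mathcomp Require Import all_boot all_order all_algebra all_field.
From mathcomp Require Import zify ring.
From Stdlib Require Import ClassicalEpsilon.
Import Order.TTheory GRing.Theory Num.Theory.
Set Implicit Arguments. Unset Strict Implicit. Unset Printing Implicit Defensive.
Local Open Scope ring_scope.

(* The completion L is Q_2(i): since 2 splits completely in F, Newton's method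
   started at roots modulo 16 of the cubic puts alpha in the closure of Q, so
   Q(i) is dense in L and every unit of L is congruent to a Gaussian integer
   M + N i modulo 8.  The group (Z[i]/4)^x is the product of <i> and
   {1, 1 + 2i}; projecting onto <i> gives chi, with chi(i) = i and
   chi(conj x) = conj (chi x), hence chi(y conj y) = |chi y|^2 = 1 on norms.
   For a unit x of Q_2: if x = 1 mod 8 it is a square of a conjugation-fixed
   element (Hensel), if x = 5 mod 8 it is 5 = (1 + 2i)(1 - 2i) times such a
   square, and if x = 3 mod 4 then chi x = -1; so chi extends chi_p. *)

Lemma pchar0_intr_eq0 (R : idomainType) (m : int) :
  [pchar R] =i pred0 -> (m%:~R == 0 :> R) = (m == 0).
Proof.
move=> /pcharf0P charR; case: m => n; first by rewrite /= charR.
by rewrite NegzE mulrNz oppr_eq0 charR.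
Qed.

Section Valuation.
Variables (L : fieldType) (v : L -> int).
Hypothesis hv : is_dval v.

Lemma dvalM x y : x != 0 -> y != 0 -> v (x * y) = v x + v y.
Proof. exact: hv.1. Qed.

Lemma dval1 : v 1 = 0.
Proof. by have := @dvalM 1 1 (oner_neq0 _) (oner_neq0 _); rewrite mulr1; lia. Qed.

Lemma dvalX x n : x != 0 -> v (x ^+ n) = n%:Z * v x.
Proof.
move=> x0; elim: n => [|n IHn]; first by rewrite expr0 dval1 mul0r.
by rewrite exprS dvalM ?expf_neq0 // IHn; lia.
Qed.

Lemma dvalN x : v (- x) = v x.
Proof.
have N1_0 : (-1 : L) != 0 by rewrite oppr_eq0 oner_eq0.
have vN1 : v (-1) = 0 by have := dvalX 2 N1_0; rewrite sqrrN expr1n dval1; lia.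
have [->|x0] := eqVneq x 0; first by rewrite oppr0.
by rewrite -mulN1r dvalM // vN1 add0r.
Qed.

Lemma dvalV x : x != 0 -> v x^-1 = - v x.
Proof.
by move=> x0; have := dvalM x0 (invr_neq0 x0); rewrite mulfV // dval1; lia.
Qed.

Lemma vgeP x n : x != 0 -> vge v x n -> n <= v x.
Proof. by move=> x0 [/eqP|//]; rewrite (negbTE x0). Qed.

Lemma vge_total x n : vge v x n \/ (x != 0 /\ v x < n).
Proof.
have [->|x0] := eqVneq x 0; first by left; left.
by have [le_nx|lt_xn] := leP n (v x); [left; right | right].
Qed.

Lemma vge_refl x : vge v x (v x).
Proof. by right. Qed.

Lemma vge_le x m n : vge v x n -> m <= n -> vge v x m.
Proof. by case=> [->|le_nx le_mn]; [left | right; apply: le_trans le_mn le_nx]. Qed.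

Lemma vge_eq0 x : (forall n : nat, vge v x n) -> x = 0.
Proof.
move=> vx; apply/eqP/negPn/negP => x0.
by have := vgeP x0 (vx (absz (v x)).+1); lia.
Qed.

Lemma vgeD x y n : vge v x n -> vge v y n -> vge v (x + y) n.
Proof.
move=> vx vy; have [->|x0] := eqVneq x 0; first by rewrite add0r.
have [->|y0] := eqVneq y 0; first by rewrite addr0.
have [->|xy0] := eqVneq (x + y) 0; first by left.
right; apply: le_trans (hv.2 x y x0 y0 xy0).
by rewrite le_min (vgeP x0 vx) (vgeP y0 vy).
Qed.

Lemma vgeN x n : vge v x n -> vge v (- x) n.
Proof. by case=> [->|vx]; [left; rewrite oppr0 | right; rewrite dvalN]. Qed.

Lemma vgeB x y n : vge v x n -> vge v y n -> vge v (x - y) n.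
Proof. by move=> vx vy; apply: vgeD vx (vgeN vy). Qed.

Lemma vgeM x y m n : vge v x m -> vge v y n -> vge v (x * y) (m + n).
Proof.
move=> vx vy; have [->|x0] := eqVneq x 0; first by rewrite mul0r; left.
have [->|y0] := eqVneq y 0; first by rewrite mulr0; left.
by right; rewrite dvalM // lerD // ?vgeP.
Qed.

Lemma vge_trans x y z n : vge v (x - y) n -> vge v (y - z) n -> vge v (x - z) n.
Proof. by move=> vxy vyz; rewrite -[x - z](subrKA y); apply: vgeD. Qed.

Lemma vge_mulB x y X Y n : vge v (x - X) n -> vge v (y - Y) n ->
  vge v x 0 -> vge v Y 0 -> vge v (x * y - X * Y) n.
Proof.
move=> vxX vyY vx vY; rewrite -[_ - _](subrKA (x * Y)) -mulrBr -mulrBl.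
by apply: vgeD; [apply: vge_le (vgeM vx vyY) _ | apply: vge_le (vgeM vxX vY) _];
  rewrite ?add0r ?addr0.
Qed.

Lemma vge_int (m : int) : vge v m%:~R 0.
Proof.
have vge_nat (n : nat) : vge v n%:R 0.
  by elim: n => [|n IHn]; [left | rewrite mulrSr; apply: vgeD => //; right; rewrite dval1].
by case: m => n; [apply: vge_nat | rewrite NegzE mulrNz; apply/vgeN/vge_nat].
Qed.

End Valuation.

Section Closure.
Variables (L : fieldType) (v : L -> int) (S : L -> Prop).
Hypothesis hv : is_dval v.

Lemma vclosure_of x : S x -> vclosure v S x.
Proof. by move=> Sx n; exists x; split=> //; rewrite subrr; left. Qed.

Lemma vclosureW (T : L -> Prop) x :
  (forall y, S y -> T y) -> vclosure v S x -> vclosure v T x.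
Proof. by move=> ST clx n; have [y [/ST Ty vxy]] := clx n; exists y. Qed.

Lemma vclosure_idem x : vclosure v (vclosure v S) x -> vclosure v S x.
Proof.
move=> clx n; have [y [cly vxy]] := clx n; have [z [Sz vyz]] := cly n.
by exists z; split=> //; apply: vge_trans vxy vyz.
Qed.

Hypotheses (SD : forall x y, S x -> S y -> S (x + y)) (SM : forall x y, S x -> S y -> S (x * y)).

Lemma vclosureD x y : vclosure v S x -> vclosure v S y -> vclosure v S (x + y).
Proof.
move=> clx cly n; have [a [Sa vxa]] := clx n; have [b [Sb vyb]] := cly n.
by exists (a + b); split; [apply: SD | rewrite opprD addrACA; apply: vgeD].
Qed.

Lemma vclosureM x y : vclosure v S x -> vclosure v S y -> vclosure v S (x * y).
Proof.
move=> clx cly n; pose m := Num.min (v y) (n - v x).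
have [b [Sb vyb]] := cly (n - v x); have [a [Sa vxa]] := clx (n - m).
have vb : vge v b m.
  rewrite -[b](subKr y); apply: vgeB => //.
    by apply: vge_le (vge_refl v y) _; rewrite ge_min lexx.
  by apply: vge_le vyb _; rewrite ge_min lexx orbT.
exists (a * b); split; first exact: SM.
rewrite -[_ - _](subrKA (x * b)) -mulrBr -mulrBl; apply: vgeD => //.
  have [->|x0] := eqVneq x 0; first by rewrite mul0r; left.
  by apply: vge_le (vgeM hv (vge_refl v x) vyb) _; lia.
by apply: vge_le (vgeM hv vxa vb) _; lia.
Qed.

Lemma vclosure_sum (I : finType) (F : I -> L) :
  S 0 -> (forall i, vclosure v S (F i)) -> vclosure v S (\sum_i F i).
Proof.
move=> S0 clF; apply: (big_ind (vclosure v S)) => //; first exact: vclosure_of.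
by move=> x y; apply: vclosureD.
Qed.

Lemma vclosureX x k : S 1 -> vclosure v S x -> vclosure v S (x ^+ k).
Proof.
move=> S1 clx; elim: k => [|k IHk]; first by rewrite expr0; apply: vclosure_of.
by rewrite exprS; apply: vclosureM.
Qed.

End Closure.

Definition gauss (R : pzRingType) (J : R) (M N : int) : R := M%:~R + N%:~R * J.

(* Q and Q(J) inside a field of characteristic 0, as fractions of integers
   ([ratr] is a ring morphism only into number fields). *)
Definition int_frac (L : fieldType) (x : L) : Prop :=
  exists M D : int, D != 0 /\ x = M%:~R / D%:~R.

Definition gauss_frac (L : fieldType) (J x : L) : Prop :=
  exists M N D : int, D != 0 /\ x = gauss J M N / D%:~R.

Lemma gauss_int (R : pzRingType) (J : R) (M : int) : gauss J M 0 = M%:~R.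
Proof. by rewrite /gauss mul0r addr0. Qed.

Lemma gaussM (R : comPzRingType) (J : R) (M N M' N' : int) : J ^+ 2 = -1 ->
  gauss J M N * gauss J M' N' = gauss J (M * M' - N * N') (M * N' + N * M').
Proof.
move=> J2; rewrite /gauss intrB intrD !intrM.
have -> : N%:~R * N'%:~R = - (N%:~R * N'%:~R * J ^+ 2) :> R by rewrite J2 mulrN1 opprK.
ring.
Qed.

Lemma int_2adic_decomp (D : int) : D != 0 ->
  exists (e : nat) (d : int), ~~ (2 %| d)%Z /\ D = 2 ^+ e * d.
Proof.
elim: {D}(absz D) {-2}D (leqnn (absz D)) => [|n IHn] D leDn D0; first by lia.
have [/dvdzP[D' eD]|oddD] := boolP (2 %| D)%Z; last by exists 0%N, D; rewrite mul1r.
have D'0 : D' != 0 by apply/eqP; lia.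
have [|e [d [oddd eD']]] := IHn D' _ D'0; first by lia.
by exists e.+1, d; split=> //; rewrite eD eD' exprSr; ring.
Qed.

Lemma odd_Bezout_2X (d : int) (k : nat) : ~~ (2 %| d)%Z ->
  exists u w : int, u * d + w * 2 ^+ k = 1.
Proof.
move=> oddd; have [u [w Bez]] := Bezoutz d (2 ^+ k); exists u, w.
rewrite Bez; apply/eqP; rewrite -/(coprimez _ _) coprimezXr // coprimezE coprimen2.
by move: oddd; rewrite dvdzE dvdn2 negbK.
Qed.

Section Fractions.
Variables (L : fieldType) (J : L).
Hypotheses (charL : [pchar L] =i pred0) (J2 : J ^+ 2 = -1).

Let intr_neq0 (D : int) : D != 0 -> (D%:~R : L) != 0.
Proof. by rewrite pchar0_intr_eq0. Qed.

Lemma int_frac_int (M : int) : int_frac (M%:~R : L).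
Proof. by exists M, 1; rewrite divr1. Qed.

Lemma int_frac_rat (c : rat) : int_frac (ratr c : L).
Proof. by exists (numq c), (denq c); split; first exact: denq_neq0. Qed.

Lemma int_fracN (x : L) : int_frac x -> int_frac (- x).
Proof. by move=> [M [D [D0 ->]]]; exists (- M), D; rewrite intrN mulNr. Qed.

Lemma int_fracD (x y : L) : int_frac x -> int_frac y -> int_frac (x + y).
Proof.
move=> [M [D [D0 ->]]] [M' [D' [D'0 ->]]].
exists (M * D' + M' * D), (D * D'); rewrite mulf_neq0 //; split=> //.
by rewrite intrD !intrM; field; rewrite !intr_neq0.
Qed.

Lemma int_fracM (x y : L) : int_frac x -> int_frac y -> int_frac (x * y).
Proof.
move=> [M [D [D0 ->]]] [M' [D' [D'0 ->]]].
exists (M * M'), (D * D'); rewrite mulf_neq0 //; split=> //.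
by rewrite !intrM; field; rewrite !intr_neq0.
Qed.

Lemma gauss_frac_int_frac (x : L) : int_frac x -> gauss_frac J x.
Proof. by move=> [M [D [D0 ->]]]; exists M, 0, D; rewrite gauss_int. Qed.

Lemma gauss_frac_J : gauss_frac J J.
Proof. by exists 0, 1, 1; rewrite divr1 /gauss add0r mul1r. Qed.

Lemma gauss_fracD (x y : L) : gauss_frac J x -> gauss_frac J y -> gauss_frac J (x + y).
Proof.
move=> [M [N [D [D0 ->]]]] [M' [N' [D' [D'0 ->]]]].
exists (M * D' + M' * D), (N * D' + N' * D), (D * D'); rewrite mulf_neq0 //.
by split=> //; rewrite /gauss !intrD !intrM; field; rewrite !intr_neq0.
Qed.

Lemma gauss_fracM (x y : L) : gauss_frac J x -> gauss_frac J y -> gauss_frac J (x * y).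
Proof.
move=> [M [N [D [D0 ->]]]] [M' [N' [D' [D'0 ->]]]].
exists (M * M' - N * N'), (M * N' + N * M'), (D * D'); rewrite mulf_neq0 //.
by split=> //; rewrite -gaussM // intrM; field; rewrite !intr_neq0.
Qed.

End Fractions.

Section Dyadic.
Variables (L : fieldType) (v : L -> int) (J : L).
Hypotheses (hv : is_dval v) (v2_gt0 : 0 < v 2) (charL : [pchar L] =i pred0).
Hypothesis J2 : J ^+ 2 = -1.

Let two_neq0 : (2 : L) != 0.
Proof. by rewrite ((pcharf0P L).1 charL 2). Qed.

Lemma dval_odd (m : int) : ~~ (2 %| m)%Z -> v m%:~R = 0.
Proof.
move=> oddm; have m0 : (m%:~R : L) != 0 by rewrite pchar0_intr_eq0 //; lia.
apply/eqP; rewrite eq_le (vgeP m0 (vge_int hv m)) andbT leNgt; apply/negP => vm_gt0.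
have [k em] : exists k, m = 2 * k + 1 by exists (m %/ 2)%Z; lia.
have : vge v (m%:~R - 2 * k%:~R) 1.
  apply: (vgeB hv); [by right | apply: vge_le (vgeM hv (vge_refl v 2) (vge_int hv k)) _; lia].
by rewrite em intrD intrM addrAC subrr add0r => -[/eqP|]; rewrite ?oner_eq0 ?dval1.
Qed.

Lemma vge_even (m : int) : (2 %| m)%Z -> vge v m%:~R (v 2).
Proof.
case/dvdzP=> k ->; rewrite intrM.
by apply: vge_le (vgeM hv (vge_int hv k) (vge_refl v 2)) _; rewrite add0r.
Qed.

Lemma vge_2X (e : nat) : vge v (2 ^+ e) (e%:Z * v 2).
Proof. by right; rewrite dvalX. Qed.

Lemma dval_2odd (m : int) : (m %% 4)%Z = 2 -> v m%:~R = v 2.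
Proof.
move=> m4; have [k [-> oddk]] : exists k, m = 2 * k /\ ~~ (2 %| k)%Z.
  by exists (m %/ 2)%Z; split; lia.
have k0 : (k%:~R : L) != 0 by rewrite pchar0_intr_eq0 //; lia.
by rewrite intrM dvalM // (dval_odd oddk) addr0.
Qed.

Lemma vge_dvd2X (e : nat) (m : int) : (2 ^+ e %| m)%Z -> vge v m%:~R (e%:Z * v 2).
Proof.
case/dvdzP=> k ->; rewrite intrM rmorphXn.
by apply: vge_le (vgeM hv (vge_int hv k) (vge_2X e)) _; rewrite add0r.
Qed.

Lemma dvd2_of_vge1 (m : int) : vge v m%:~R 1 -> (2 %| m)%Z.
Proof.
move=> vm; apply: contraT => oddm; have m0 : (m%:~R : L) != 0 by rewrite pchar0_intr_eq0 //; lia.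
by have := vgeP m0 vm; rewrite dval_odd.
Qed.

Lemma J_neq0 : J != 0.
Proof. by apply: contra_eq_neq J2 => ->; rewrite expr0n /= eq_sym oppr_eq0 oner_eq0. Qed.

Lemma dvalJ : v J = 0.
Proof. by have := dvalX hv 2 J_neq0; rewrite J2 dvalN // dval1 //; lia. Qed.

Let sqrJ1 : (J - 1) ^+ 2 = - (2 * J).
Proof. by rewrite sqrrB1 J2; ring. Qed.

Let J1_neq0 : J - 1 != 0.
Proof.
by apply: contra_eq_neq sqrJ1 => ->; rewrite expr0n /= eq_sym oppr_eq0 mulf_neq0 ?J_neq0.
Qed.

Lemma dvalJ1 : 2 * v (J - 1) = v 2.
Proof.
have := dvalX hv 2 J1_neq0.
by rewrite sqrJ1 dvalN // (dvalM hv two_neq0 J_neq0) dvalJ; lia.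
Qed.

Lemma vge_gauss (M N : int) : vge v (gauss J M N) 0.
Proof.
apply: vgeD => //; first exact: vge_int.
by apply: vge_le (vgeM hv (vge_int hv N) (vge_refl v J)) _; rewrite dvalJ.
Qed.

Let gauss_J1 (M N : int) : gauss J M N = (M + N)%:~R + N%:~R * (J - 1).
Proof. by rewrite /gauss intrD; ring. Qed.

Let vge_J1 (N : int) : vge v (N%:~R * (J - 1)) 1.
Proof. by apply: vge_le (vgeM hv (vge_int hv N) (vge_refl v (J - 1))) _; have := dvalJ1; lia. Qed.

Lemma vge1_gauss (M N : int) : (2 %| M + N)%Z -> vge v (gauss J M N) 1.
Proof.
move=> evenMN; rewrite gauss_J1; apply: (vgeD hv) (vge_J1 N).
by apply: vge_le (vge_even evenMN) _; lia.
Qed.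

Lemma dvd2_gauss (M N : int) :
  vge v (gauss J M N) (v 2) -> (2 %| M)%Z && (2 %| N)%Z.
Proof.
move=> vg; have evenMN : (2 %| M + N)%Z.
  apply: dvd2_of_vge1; rewrite -[_%:~R](addrK (N%:~R * (J - 1))) -gauss_J1.
  by apply: (vgeB hv) (vge_J1 N); apply: vge_le vg _; lia.
suff evenN : (2 %| N)%Z by rewrite evenN andbT; lia.
apply: contraT => oddN.
have N0 : (N%:~R : L) != 0 by rewrite pchar0_intr_eq0 //; lia.
have : vge v (N%:~R * (J - 1)) (v 2).
  rewrite -[_ * _](addKr (M + N)%:~R) -gauss_J1.
  by apply: (vgeD hv) vg; apply/(vgeN hv)/vge_even.
move/(vgeP (mulf_neq0 N0 J1_neq0)); rewrite dvalM // dval_odd // add0r.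
by have := dvalJ1; lia.
Qed.

Lemma dvd2X_gauss (e : nat) (M N : int) :
  vge v (gauss J M N) (e%:Z * v 2) -> (2 ^+ e %| M)%Z && (2 ^+ e %| N)%Z.
Proof.
elim: e M N => [|e IHe] M N vg; first by rewrite !dvd1z.
have /dvd2_gauss/andP[/dvdzP[M1 eM] /dvdzP[N1 eN]] : vge v (gauss J M N) (v 2).
  by apply: vge_le vg _; lia.
rewrite {}eM {}eN in vg *.
have eg : gauss J (M1 * 2) (N1 * 2) = gauss J M1 N1 * 2 by rewrite /gauss !intrM; ring.
have /IHe : vge v (gauss J M1 N1) (e%:Z * v 2).
  have [->|g0] := eqVneq (gauss J M1 N1) 0; first by left.
  by right; move: vg; rewrite eg => /(vgeP (mulf_neq0 g0 two_neq0)); rewrite dvalM //; lia.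
by rewrite exprSr !dvdz_mul2r.
Qed.

(* Write the denominator as 2^e d with d odd: integrality makes 2^e divide the
   numerator, and 1/d is approximated by an inverse of d modulo 2^|n|. *)
Lemma gauss_frac_integral_approx (M N D : int) (n : int) : D != 0 ->
  vge v (gauss J M N / D%:~R) 0 ->
  exists M' N', vge v (gauss J M N / D%:~R - gauss J M' N') n /\ (N = 0 -> N' = 0).
Proof.
move=> D0 vMND; have [e [d [oddd eD]]] := int_2adic_decomp D0.
have d0 : (d%:~R : L) != 0 by rewrite pchar0_intr_eq0 //; lia.
have vg : vge v (gauss J M N) (e%:Z * v 2).
  have [->|g0] := eqVneq (gauss J M N) 0; first by left.
  have D0' : (D%:~R : L) != 0 by rewrite pchar0_intr_eq0.
  have vD : v D%:~R = e%:Z * v 2.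
    by rewrite eD intrM rmorphXn dvalM ?expf_neq0 // dvalX // dval_odd // addr0.
  right; rewrite -(divfK D0' (gauss J M N)) dvalM ?mulf_neq0 ?invr_eq0 // vD.
  by rewrite lerDr (vgeP (mulf_neq0 g0 (invr_neq0 D0')) vMND).
have /andP[/dvdzP[M1 eM] /dvdzP[N1 eN]] := dvd2X_gauss vg.
have [u [w Bez]] := odd_Bezout_2X (absz n) oddd.
exists (M1 * u), (N1 * u); split; last first.
  move=> N0; move: eN; rewrite N0 => /esym/eqP.
  by rewrite mulf_eq0 expf_eq0 andbF orbF => /eqP ->; rewrite mul0r.
have -> : gauss J M N / D%:~R - gauss J (M1 * u) (N1 * u)
    = gauss J M1 N1 * w%:~R * 2 ^+ absz n / d%:~R.
  have BezL : w%:~R * 2 ^+ absz n = 1 - u%:~R * d%:~R :> L.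
    move/(congr1 (fun m : int => m%:~R : L)): Bez.
    rewrite /= intrD !intrM rmorphXn -pmulrn rmorph1 => Bez.
    by rewrite -[X in X - _]Bez addrC addKr.
  have eg : gauss J M N = gauss J M1 N1 * 2 ^+ e.
    by rewrite eM eN /gauss !intrM rmorphXn /=; ring.
  rewrite eg eD -(mulrA _ w%:~R) BezL /gauss !intrM rmorphXn ?rmorph_nat; field.
  by rewrite d0 expf_neq0.
have vgw := vgeM hv (vge_gauss M1 N1) (vge_int hv w).
apply: vge_le (vgeM hv (vgeM hv vgw (vge_2X _)) (vge_refl v d%:~R^-1)) _.
by rewrite dvalV // dval_odd //; nia.
Qed.

Lemma integral_gauss_approx x (n : int) : vge v x 0 -> vclosure v (gauss_frac J) x ->
  exists M N, vge v (x - gauss J M N) n.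
Proof.
move=> vx /(_ (Num.max n 0)) [_ [[M [N [D [D0 ->]]]] vxy]].
have [|M' [N' [vyg _]]] := @gauss_frac_integral_approx M N D n D0.
  by rewrite -[_ / _](subKr x); apply: vgeB => //; apply: vge_le vxy _; rewrite le_max lexx orbT.
by exists M', N'; apply: (vge_trans hv) vyg; apply: vge_le vxy _; rewrite le_max lexx.
Qed.

Lemma integral_int_approx x (n : int) : vge v x 0 -> vclosure v (@int_frac L) x ->
  exists M, vge v (x - M%:~R) n.
Proof.
move=> vx /(_ (Num.max n 0)) [_ [[M [D [D0 ->]]] vxy]].
rewrite -(gauss_int J) in vxy *.
have [|M' [N' [vyg /(_ erefl) N'0]]] := @gauss_frac_integral_approx M 0 D n D0.
  by rewrite -[_ / _](subKr x); apply: vgeB => //; apply: vge_le vxy _; rewrite le_max lexx orbT.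
exists M'; rewrite -(gauss_int J) -N'0.
by apply: (vge_trans hv) vyg; apply: vge_le vxy _; rewrite le_max lexx.
Qed.

End Dyadic.

Section DepressedCubic.
Variables (L : fieldType) (v : L -> int).
Hypotheses (hv : is_dval v) (v2_gt0 : 0 < v 2) (charL : [pchar L] =i pred0).
Variables (P Q : int) (A : L).
Hypothesis rootA : A ^+ 3 + P%:~R * A + Q%:~R = 0.

Let int_frac_cubic (q : L) : int_frac q -> int_frac (q ^+ 3 + P%:~R * q + Q%:~R).
Proof.
move=> fq; rewrite exprSr expr2; have fM := int_fracM charL; have fD := int_fracD charL.
exact: fD _ _ (fD _ _ (fM _ _ (fM _ _ fq fq) fq) (fM _ _ (int_frac_int _ P) fq))
  (int_frac_int _ Q).
Qed.

Lemma cubic_root_integral : vge v A 0.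
Proof.
have [//|[A0 vA_lt0]] := vge_total v A 0; exfalso.
have : vge v (A ^+ 3) (v A).
  have -> : A ^+ 3 = - (P%:~R * A + Q%:~R) by rewrite -[LHS]subr0 -rootA; ring.
  apply/vgeN/vgeD => //.
    by apply: vge_le (vgeM hv (vge_int hv P) (vge_refl v A)) _; rewrite add0r.
  by apply: vge_le (vge_int hv Q) _; lia.
by move/(vgeP (expf_neq0 3 A0)); rewrite dvalX //; lia.
Qed.

(* Newton's method with the derivative C frozen at r: each step multiplies the
   error A - q by (C - h)/C, and v(C - h) >= mu > v(C). *)
Lemma newton_vclosure (r mu : int) : 3 * r ^+ 2 + P != 0 ->
  v (3 * r ^+ 2 + P)%:~R < mu -> vge v (A - r%:~R) mu -> vclosure v (@int_frac L) A.
Proof.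
move=> c0 lt_c_mu vAr; set C : L := (3 * r ^+ 2 + P)%:~R in lt_c_mu.
have C0 : C != 0 by rewrite pchar0_intr_eq0.
have mu_ge0 : 0 <= mu by have := vgeP C0 (vge_int hv _); lia.
suff approx (N : nat) : exists q, int_frac q /\ vge v (A - q) (mu + N%:Z).
  move=> n; have [q [fq vAq]] := approx (absz n).
  by exists q; split=> //; apply: vge_le vAq _; lia.
elim: N => [|N [q [fq vAq]]]; first by exists r%:~R; rewrite addr0; split=> //; apply: int_frac_int.
pose h := A ^+ 2 + A * q + q ^+ 2 + P%:~R.
exists (q - (q ^+ 3 + P%:~R * q + Q%:~R) / C); split.
  have fC : int_frac C^-1 by exists 1, (3 * r ^+ 2 + P); rewrite mul1r.
  by apply: (int_fracD charL fq); apply/int_fracN/(int_fracM charL (int_frac_cubic fq) fC).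
have -> : A - (q - (q ^+ 3 + P%:~R * q + Q%:~R) / C) = (A - q) * ((C - h) / C).
  have eQ : Q%:~R = - (A ^+ 3 + P%:~R * A).
    by apply/eqP; rewrite -subr_eq0 opprK addrC rootA.
  by rewrite eQ /h; field; move: C0; rewrite /C intrD intrM rmorphXn.
have vCh : vge v (C - h) mu.
  have vAR : vge v (A - r%:~R) mu := vAr.
  have vqR : vge v (q - r%:~R) mu.
    have -> : q - r%:~R = (A - r%:~R) - (A - q) by ring.
    by apply: vgeB => //; apply: vge_le vAq _; lia.
  have vmul x y : vge v x mu -> vge v y mu -> vge v (x * y) mu.
    by move=> vx vy; apply: vge_le (vgeM hv vx vy) _; lia.
  have -> : C - h = - ((3 * r)%:~R * ((A - r%:~R) + (q - r%:~R)) + (A - r%:~R) * (A - r%:~R)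
      + (A - r%:~R) * (q - r%:~R) + (q - r%:~R) * (q - r%:~R)).
    by rewrite /C /h !intrD !intrM; ring.
  apply: (vgeN hv); do 3![apply: (vgeD hv); last exact: vmul].
  by apply: vge_le (vgeM hv (vge_int hv _) (vgeD hv vAR vqR)) _; rewrite add0r.
apply: vge_le (vgeM hv vAq (vgeM hv vCh (vge_refl v C^-1))) _.
by rewrite dvalV //; lia.
Qed.

(* r0, r1, r2 are roots of the cubic modulo 16, with f'(r0) odd and
   v(f'(r1)) = v(f'(r2)) = v(2).  If A is not close to r0, then
   v(A - r1) + v(A - r2) >= 4 v(2), so Newton's method applies at r1 or r2. *)
Lemma cubic_vclosure (r0 r1 r2 : int) :
  (2 ^+ 4 %| r0 + r1 + r2)%Z -> (2 ^+ 4 %| r0 * r1 + r1 * r2 + r2 * r0 - P)%Z ->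
  (2 ^+ 4 %| r0 * r1 * r2 + Q)%Z ->
  ~~ (2 %| 3 * r0 ^+ 2 + P)%Z -> ((3 * r1 ^+ 2 + P) %% 4)%Z = 2 ->
  ((3 * r2 ^+ 2 + P) %% 4)%Z = 2 ->
  vclosure v (@int_frac L) A.
Proof.
move=> e1 e2 e3 c0 c1 c2; have vA := cubic_root_integral.
have [vAr0|[Ar0_neq0 vAr0]] := vge_total v (A - r0%:~R) 1.
  by apply: (newton_vclosure (mu := 1)) vAr0; [apply/eqP; lia | rewrite dval_odd].
have newton2 r : ((3 * r ^+ 2 + P) %% 4)%Z = 2 -> vge v (A - r%:~R) (v 2 + 1) ->
    vclosure v (@int_frac L) A.
  by move=> cr; apply: newton_vclosure; [apply/eqP; lia | rewrite dval_2odd //; lia].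
have [vAr1|[Ar1_neq0 vAr1]] := vge_total v (A - r1%:~R) (v 2 + 1); first exact: newton2 c1 vAr1.
have [vAr2|[Ar2_neq0 vAr2]] := vge_total v (A - r2%:~R) (v 2 + 1); first exact: newton2 c2 vAr2.
have vAr0' : v (A - r0%:~R) = 0.
  by have := vgeP Ar0_neq0 (vgeB hv vA (vge_int hv r0)); lia.
have : vge v ((A - r0%:~R) * (A - r1%:~R) * (A - r2%:~R)) (4%:Z * v 2).
  have -> : (A - r0%:~R) * (A - r1%:~R) * (A - r2%:~R) =
      - ((r0 + r1 + r2)%:~R * A ^+ 2) + (r0 * r1 + r1 * r2 + r2 * r0 - P)%:~R * A
      - (r0 * r1 * r2 + Q)%:~R.
    by rewrite -[LHS]subr0 -rootA !(intrD, intrB, intrM); ring.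
  have vmul x m : (2 ^+ 4 %| m)%Z -> vge v x 0 -> vge v (m%:~R * x) (4%:Z * v 2).
    by move=> dm vx; apply: vge_le (vgeM hv (vge_dvd2X hv charL dm) vx) _; rewrite addr0.
  have v1 : vge v 1 0 by right; rewrite dval1.
  apply: (vgeB hv); last by rewrite -[_%:~R]mulr1; apply: vmul.
  apply: (vgeD hv); last exact: vmul.
  by apply/(vgeN hv)/vmul => //; rewrite expr2; apply: vge_le (vgeM hv vA vA) _.
move/(vgeP (mulf_neq0 (mulf_neq0 Ar0_neq0 Ar1_neq0) Ar2_neq0)).
by rewrite !dvalM ?mulf_neq0 // vAr0'; lia.
Qed.

End DepressedCubic.

Definition z4 (m : int) : 'Z_4 := m%:~R.

(* (Z[i]/4)^x = <i> x {1, 1 + 2i}; for a unit u + w i, chi_exp u w is the k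
   with u + w i in i^k {1, 1 + 2i}. *)
Definition chi_exp (u w : 'Z_4) : nat :=
  if u == 1 then 0 else if u == -1 then 2 else if w == 1 then 1 else 3.

Lemma chi_expM (u w u' w' : 'Z_4) :
  (u + w) \is a GRing.unit -> (u' + w') \is a GRing.unit ->
  chi_exp (u * u' - w * w') (u * w' + w * u') = ((chi_exp u w + chi_exp u' w') %% 4)%N.
Proof. by move: u w u' w'; do 4![case=> [[|[|[|[|?]]]] ?]]. Qed.

Lemma chi_expN (u w : 'Z_4) :
  (u + w) \is a GRing.unit -> chi_exp u (- w) = ((3 * chi_exp u w) %% 4)%N.
Proof. by move: u w; do 2![case=> [[|[|[|[|?]]]] ?]]. Qed.

Lemma z4_eq (m m' : int) : (2 ^+ 2 %| m - m')%Z -> z4 m = z4 m'.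
Proof.
case/dvdzP=> k /eqP; rewrite subr_eq => /eqP ->.
by rewrite /z4 intrD intrM (_ : (2 ^+ 2)%:~R = 0 :> 'Z_4) ?mulr0 ?add0r //; apply/val_inj.
Qed.

Lemma z4_unit (m : int) : ~~ (2 %| m)%Z -> z4 m \is a GRing.unit.
Proof.
move=> oddm; have [k [-> | ->]] : exists k, m = 2 ^+ 2 * k + 1 \/ m = 2 ^+ 2 * k + 3.
  by exists (m %/ 4)%Z; lia.
  by rewrite (@z4_eq _ 1) // addrK dvdz_mulr.
by rewrite (@z4_eq _ 3) // addrK dvdz_mulr.
Qed.

Section Norms.
Variables (L : fieldType) (v : L -> int) (sigma : {rmorphism L -> L}).
Hypotheses (hv : is_dval v) (charL : [pchar L] =i pred0) (complete : vcomplete v).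
Hypothesis v_sigma : forall x, x != 0 -> v (sigma x) = v x.

Let natrS_neq0 (n : nat) : (n.+1%:R : L) != 0.
Proof. by rewrite ((pcharf0P L).1 charL). Qed.

Lemma vge_sigma x n : vge v x n -> vge v (sigma x) n.
Proof.
case=> [->|vx]; first by rewrite rmorph0; left.
have [->|x0] := eqVneq x 0; first by rewrite rmorph0; left.
by right; rewrite v_sigma.
Qed.

Lemma vunit_sigma x : vunit v x -> vunit v (sigma x).
Proof. by case=> x0 vx; split; [rewrite fmorph_eq0 | rewrite v_sigma]. Qed.

Lemma sigma_fixed_closed x : vclosure v (fun y => sigma y = y) x -> sigma x = x.
Proof.
move=> clx; apply/eqP; rewrite -subr_eq0; apply/eqP; apply: (@vge_eq0 _ v) => n.
have [y [sy vxy]] := clx n.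
have -> : sigma x - x = sigma (x - y) - (x - y) by rewrite rmorphB sy; ring.
by apply: vgeB => //; apply: vge_sigma.
Qed.

Lemma vcomplete_lim (s : nat -> L) : (forall n, vge v (s n.+1 - s n) n) ->
  exists l, forall n : nat, vge v (s n - l) n.
Proof.
move=> steps; have cauchy N k : vge v (s (N + k)%N - s N) N.
  elim: k => [|k IHk]; first by rewrite addn0 subrr; left.
  rewrite -(subrKA (s (N + k)%N)) addnS; apply: vgeD => //.
  by apply: vge_le (steps _) _; lia.
have [l lim_l] : exists l, forall n : int, exists N : nat, forall m : nat,
    (N <= m)%N -> vge v (s m - l) n.
  apply: complete => n; exists (absz n) => m k le_nm le_nk.
  have -> : s m - s k = (s m - s (absz n)) - (s k - s (absz n)) by ring.
  rewrite -(subnKC le_nm) -(subnKC le_nk).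
  by apply: vgeB => //; apply: vge_le (cauchy _ _) _; lia.
exists l => n; have [N limN] := lim_l n.
have -> : s n - l = (s (n + N)%N - l) - (s (n + N)%N - s n) by ring.
by apply: (vgeB hv); [apply: limN; lia | apply: cauchy].
Qed.

(* u |-> t - u^2 is a contraction on the ideal v >= 1. *)
Lemma fixed_root_sqr_add t : vge v t 1 -> sigma t = t ->
  exists l, l ^+ 2 + l = t /\ sigma l = l.
Proof.
move=> vt st; pose s n := iter n (fun u => t - u ^+ 2) 0.
have sS n : s n.+1 = t - s n ^+ 2 by [].
have vs n : vge v (s n) 1.
  elim: n => [|n IHn]; first by left.
  by rewrite sS; apply: vgeB => //; apply: vge_le (vgeM hv IHn IHn) _.
have ss n : sigma (s n) = s n.
  by elim: n => [|n IHn]; rewrite ?rmorph0 // sS rmorphB rmorphXn IHn st.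
have steps n : vge v (s n.+1 - s n) n.+1.
  elim: n => [|n IHn]; first by rewrite sS /= expr0n /= !subr0.
  have -> : s n.+2 - s n.+1 = - ((s n.+1 - s n) * (s n.+1 + s n)) by rewrite !sS; ring.
  by apply/(vgeN hv)/(vge_le (vgeM hv IHn (vgeD hv (vs _) (vs _)))); lia.
have [l lim_l] : exists l, forall n : nat, vge v (s n - l) n.
  by apply: vcomplete_lim => n; apply: vge_le (steps n) _; lia.
have vl : vge v l 0 by have := vgeN hv (lim_l 0%N); rewrite sub0r opprK.
exists l; split.
  apply/eqP; rewrite -subr_eq0; apply/eqP; apply: (@vge_eq0 _ v) => n.
  have -> : l ^+ 2 + l - t = (l - s n) * (l + s n) - (s n.+1 - l) by rewrite sS; ring.
  apply: (vgeB hv); last by apply: vge_le (lim_l _) _; lia.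
  have vls : vge v (l - s n) n by rewrite -opprB; apply/(vgeN hv)/lim_l.
  have vsn : vge v (s n) 0 by apply: vge_le (vs n) _.
  by apply: vge_le (vgeM hv vls (vgeD hv vl vsn)) _; rewrite addr0.
apply: sigma_fixed_closed => n; exists (s (absz n)); split=> //.
by rewrite -opprB; apply/(vgeN hv)/(vge_le (lim_l _)); lia.
Qed.

Lemma fixed_sqrt w : sigma w = w -> vge v (w - 1) (2%:Z * v 2 + 1) ->
  exists z, z ^+ 2 = w /\ sigma z = z.
Proof.
move=> sw vw; pose t := (w - 1) / 2 ^+ 2.
have ew : w = 1 + 2 ^+ 2 * t by rewrite /t; field; apply: natrS_neq0.
have vt : vge v t 1.
  apply: vge_le (vgeM hv vw (vge_refl v (2 ^+ 2)^-1)) _.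
  by rewrite dvalV ?expf_neq0 ?natrS_neq0 // dvalX ?natrS_neq0 // addrAC subrr add0r.
have st : sigma t = t.
  by rewrite /t rmorphM fmorphV rmorphB rmorph1 rmorphXn rmorph_nat sw.
have [l [el sl]] := fixed_root_sqr_add vt st.
exists (1 + 2 * l); split; first by rewrite [RHS]ew -el; ring.
by rewrite rmorphD rmorph1 rmorphM rmorph_nat sl.
Qed.

Lemma norm_of_1mod w : w != 0 -> sigma w = w -> vge v (w - 1) (2%:Z * v 2 + 1) ->
  exists y, y != 0 /\ y * sigma y = w.
Proof.
move=> w0 sw /(fixed_sqrt sw) [z [ez sz]]; exists z; rewrite sz -expr2 ez.
by split=> //; apply: contra_neq w0 => z0; rewrite -ez z0 expr0n.
Qed.

Variable J : L.
Hypotheses (v2_gt0 : 0 < v 2) (J2 : J ^+ 2 = -1) (sigmaJ : sigma J = - J).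

Lemma norm_of_5mod w : w != 0 -> sigma w = w -> vge v (w - 5) (2%:Z * v 2 + 1) ->
  exists y, y != 0 /\ y * sigma y = w.
Proof.
move=> w0 sw vw; have five0 : (5 : L) != 0 := natrS_neq0 4.
have norm5 : (1 + 2 * J) * sigma (1 + 2 * J) = 5.
  rewrite rmorphD rmorph1 rmorphM rmorph_nat sigmaJ.
  have -> : (1 + 2 * J) * (1 + 2 * - J) = 1 - 2 ^+ 2 * J ^+ 2 by ring.
  by rewrite J2; ring.
have w5_neq0 : w / 5 != 0 by rewrite mulf_neq0 ?invr_eq0.
have sw5 : sigma (w / 5) = w / 5 by rewrite fmorph_div rmorph_nat sw.
have vw5 : vge v (w / 5 - 1) (2%:Z * v 2 + 1).
  have -> : w / 5 - 1 = (w - 5) / 5 by field.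
  apply: vge_le (vgeM hv vw (vge_refl v 5^-1)) _.
  by rewrite dvalV // (dval_odd hv v2_gt0 charL (m := 5)) //; lia.
have [y [y0 ey]] := norm_of_1mod w5_neq0 sw5 vw5.
exists ((1 + 2 * J) * y); split.
  by rewrite mulf_neq0 //; apply: contra_neq five0 => J0; rewrite -norm5 J0 mul0r.
by rewrite rmorphM mulrACA norm5 ey; field.
Qed.

End Norms.

(* Meaningful on units only; elsewhere the value is arbitrary. *)
Definition gauss_chi (L : fieldType) (v : L -> int) (J x : L) : algC :=
  let p := epsilon (inhabits (0, 0))
    (fun p : int * int => vge v (x - gauss J p.1 p.2) (2%:Z * v 2)) in
  'i ^+ chi_exp (z4 p.1) (z4 p.2).

Lemma expCi4 : ('i : algC) ^+ 4 = 1.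
Proof. by rewrite (exprM 'i 2 2) sqrCi sqrrN expr1n. Qed.

Lemma expCi_mod4 (k : nat) : ('i : algC) ^+ (k %% 4) = 'i ^+ k.
Proof. exact: expr_mod expCi4. Qed.

Section GaussCharacter.
Variables (L : fieldType) (v : L -> int) (J : L) (sigma : {rmorphism L -> L}).
Hypotheses (hv : is_dval v) (v2_gt0 : 0 < v 2) (charL : [pchar L] =i pred0).
Hypotheses (J2 : J ^+ 2 = -1) (sigmaJ : sigma J = - J).
Hypothesis v_sigma : forall x, x != 0 -> v (sigma x) = v x.
Hypothesis unit_approx :
  forall x, vunit v x -> exists M N, vge v (x - gauss J M N) (2%:Z * v 2).

Local Notation chi := (gauss_chi v J).

Lemma gauss_chiE x M N : vge v (x - gauss J M N) (2%:Z * v 2) ->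
  chi x = 'i ^+ chi_exp (z4 M) (z4 N).
Proof.
move=> vx; pose P (p : int * int) := vge v (x - gauss J p.1 p.2) (2%:Z * v 2).
have : P (epsilon (inhabits (0, 0)) P) by apply: epsilon_spec; exists (M, N).
rewrite /gauss_chi -/P; case: (epsilon _ P) => M' N' /= vp.
have : vge v (gauss J (M - M') (N - N')) (2%:Z * v 2).
  have -> : gauss J (M - M') (N - N') = (x - gauss J M' N') - (x - gauss J M N).
    by rewrite /gauss !intrB; ring.
  exact: vgeB.
by case/(dvd2X_gauss hv v2_gt0 charL J2)/andP => /z4_eq <- /z4_eq <-.
Qed.

Lemma gauss_residue_unit x M N : vunit v x -> vge v (x - gauss J M N) 1 ->
  (z4 M + z4 N) \is a GRing.unit.
Proof.
move=> [x0 vx] vxg; rewrite -rmorphD z4_unit //; apply: contraT; rewrite negbK => evenMN.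
have := vgeD hv vxg (vge1_gauss hv v2_gt0 charL J2 evenMN).
by rewrite subrK => /(vgeP x0); rewrite vx.
Qed.

Lemma gauss_chiM x y : vunit v x -> vunit v y -> chi (x * y) = chi x * chi y.
Proof.
move=> ux uy; have [M [N vx]] := unit_approx ux; have [M' [N' vy]] := unit_approx uy.
have vxy : vge v (x * y - gauss J (M * M' - N * N') (M * N' + N * M')) (2%:Z * v 2).
  rewrite -gaussM //; apply: vge_mulB => //; last exact: vge_gauss.
  by right; rewrite ux.2.
have vge1 z M1 N1 : vge v (z - gauss J M1 N1) (2%:Z * v 2) -> vge v (z - gauss J M1 N1) 1.
  by move=> vz; apply: vge_le vz _; lia.
rewrite (gauss_chiE vxy) (gauss_chiE vx) (gauss_chiE vy) -exprD.
rewrite /z4 intrB intrD !intrM chi_expM ?expCi_mod4 //.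
  exact: gauss_residue_unit ux (vge1 _ _ _ vx).
exact: gauss_residue_unit uy (vge1 _ _ _ vy).
Qed.

Lemma gauss_chiX4 x : chi x ^+ 4 = 1.
Proof. by rewrite /gauss_chi exprAC expCi4 expr1n. Qed.

Lemma gauss_chiJ : chi J = 'i.
Proof.
rewrite (@gauss_chiE J 0 1) ?expr1 // /gauss add0r mul1r subrr.
by left.
Qed.

Lemma gauss_chiN1 x : vge v (x + 1) (2%:Z * v 2) -> chi x = -1.
Proof.
by move=> vx; rewrite (@gauss_chiE x (-1) 0) ?sqrCi // gauss_int opprK.
Qed.

Lemma sigma_gauss M N : sigma (gauss J M N) = gauss J M (- N).
Proof. by rewrite rmorphD rmorphM !rmorph_int sigmaJ /gauss intrN mulrN mulNr. Qed.

Lemma gauss_chi_sigma x : vunit v x -> chi (sigma x) = (chi x)^*.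
Proof.
move=> ux; have [M [N vx]] := unit_approx ux.
have vsx : vge v (sigma x - gauss J M (- N)) (2%:Z * v 2).
  by rewrite -sigma_gauss -rmorphB; apply: (vge_sigma v_sigma).
rewrite (gauss_chiE vsx) (gauss_chiE vx) /z4 intrN chi_expN; last first.
  by apply: gauss_residue_unit ux _; apply: vge_le vx _; lia.
by rewrite expCi_mod4 rmorphXn /= conjCi exprM exprS sqrCi mulrN1.
Qed.

Lemma gauss_chi_norm y : vunit v y -> chi (y * sigma y) = 1.
Proof.
move=> uy; have usy := vunit_sigma v_sigma uy.
rewrite gauss_chiM // gauss_chi_sigma // /gauss_chi.
by rewrite rmorphXn /= conjCi -exprMn mulrN -expr2 sqrCi opprK expr1n.
Qed.

Hypothesis complete : vcomplete v.

Lemma gauss_chi_fixed x (M : int) : vunit v x -> sigma x = x ->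
  vge v (x - M%:~R) (3%:Z * v 2) ->
  ((exists y, y != 0 /\ y * sigma y = x) -> chi x = 1) /\
  (~ (exists y, y != 0 /\ y * sigma y = x) -> chi x = -1).
Proof.
move=> [x0 vx] sx vxM; split.
  move=> [y [y0 exy]]; rewrite -exy; apply: gauss_chi_norm; split=> //.
  by move: vx; rewrite -exy dvalM ?fmorph_eq0 // v_sigma //; lia.
move=> not_norm; have oddM : ~~ (2 %| M)%Z.
  apply/negP => evenM; have : vge v x 1.
    rewrite -[x](subrK M%:~R); apply: vgeD => //; first by apply: vge_le vxM _; lia.
    by apply: vge_le (vge_even hv evenM) _; lia.
  by move/(vgeP x0); rewrite vx.
have vx_mod (c : int) (e : nat) : (2 ^+ e %| M - c)%Z -> (e <= 3)%N ->
    vge v (x - c%:~R) (e%:Z * v 2).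
  move=> dMc le_e3; have -> : x - c%:~R = (x - M%:~R) + (M - c)%:~R by rewrite intrB; ring.
  by apply: vgeD => //; [apply: vge_le vxM _; nia | apply: vge_dvd2X].
have vx_norm c : (2 ^+ 3 %| M - c)%Z -> vge v (x - c%:~R) (2%:Z * v 2 + 1).
  by move=> dMc; apply: vge_le (vx_mod c 3 dMc isT) _; lia.
have [/vx_norm | [/vx_norm | /vx_mod/(_ isT)]] :
    (2 ^+ 3 %| M - 1)%Z \/ (2 ^+ 3 %| M - 5)%Z \/ (2 ^+ 2 %| M - (-1))%Z.
- lia.
- by move/(norm_of_1mod hv charL complete v_sigma x0 sx).
- by move/(norm_of_5mod hv charL complete v_sigma v2_gt0 J2 sigmaJ x0 sx).
- by rewrite opprK => /gauss_chiN1.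
Qed.

End GaussCharacter.

Section Completion.
Variables (K : fieldType) (a j : K) (rho : {rmorphism K -> K}).
Variables (L : fieldType) (v : L -> int) (iota : {rmorphism K -> L}).
Variable sigma : {rmorphism L -> L}.
Hypotheses (hv : is_dval v) (v2_gt0 : 0 < v 2) (charL : [pchar L] =i pred0).
Hypotheses (j2 : j ^+ 2 = -1) (gen : generated_by a j).
Hypotheses (rho_a : rho a = a) (sigma_iota : forall x, sigma (iota x) = iota (rho x)).
Hypothesis v_sigma : forall x, x != 0 -> v (sigma x) = v x.

Local Notation J := (iota j).
Local Notation A := (iota a).

Lemma iota_J2 : J ^+ 2 = -1.
Proof. by rewrite -rmorphXn j2 rmorphN1. Qed.

Lemma alpha_vclosure :
  [\/ a ^+ 3 - 93 * a + 124 = 0, a ^+ 3 - 129 * a - 344 = 0 | a ^+ 3 - 21 * a - 28 = 0] ->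
  vclosure v (@int_frac L) A.
Proof.
case=> /(congr1 iota);
  rewrite rmorph0 ?[iota (_ + _%:R)]rmorphD !rmorphB rmorphXn rmorphM !rmorph_nat -mulNr.
- by move/(@cubic_vclosure _ _ hv v2_gt0 charL (-93) 124 A)/(_ 12 1 3); apply.
- by move/(@cubic_vclosure _ _ hv v2_gt0 charL (-129) (-344) A)/(_ 8 3 5); apply.
- by move/(@cubic_vclosure _ _ hv v2_gt0 charL (-21) (-28) A)/(_ 4 1 11); apply.
Qed.

Hypothesis A_frac : vclosure v (@int_frac L) A.

Lemma vclosure_iota_gauss y : vclosure v (gauss_frac J) (iota y).
Proof.
have J2 := iota_J2; have [c ->] := gen y.
have gD := @gauss_fracD L J charL; have gM := gauss_fracM charL J2.
have g0 : gauss_frac J 0 by apply/gauss_frac_int_frac; rewrite -(mulr0z 1); apply: int_frac_int.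
have g1 : gauss_frac J 1 by apply/gauss_frac_int_frac; rewrite -(mulr1z 1); apply: int_frac_int.
rewrite rmorph_sum; apply: vclosure_sum => // k; rewrite rmorph_sum.
apply: vclosure_sum => // l; rewrite 2!rmorphM fmorph_rat !rmorphXn.
apply: vclosureM => //; [apply: vclosureM => // | apply/vclosureX/vclosure_of/gauss_frac_J => //].
  exact/vclosure_of/gauss_frac_int_frac/int_frac_rat.
by apply/vclosureX/(vclosureW _ A_frac) => // x; apply: gauss_frac_int_frac.
Qed.

Hypothesis dense : vdense v iota.

Lemma vunit_gauss_approx x (n : int) : vunit v x -> exists M N, vge v (x - gauss J M N) n.
Proof.
move=> [_ vx]; apply: (integral_gauss_approx hv v2_gt0 charL iota_J2); first by right; rewrite vx.
apply: (vclosure_idem hv) => m; have [y vxy] := dense x m.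
by exists (iota y); split=> //; apply: vclosure_iota_gauss.
Qed.

Lemma vclosure_Qa x : vclosure v (fun z => exists y, in_Qa a y /\ z = iota y) x ->
  vclosure v (@int_frac L) x /\ sigma x = x.
Proof.
have fD := int_fracD charL; have fM := int_fracM charL.
have f1 : int_frac (1 : L) by rewrite -(mulr1z 1); apply: int_frac_int.
have Qa_frac z : (exists y, in_Qa a y /\ z = iota y) -> vclosure v (@int_frac L) z /\ sigma z = z.
  move=> [_ [[c ->] ->]]; split.
    rewrite rmorph_sum; apply: vclosure_sum => // [|k].
      by rewrite -(mulr0z 1); apply: int_frac_int.
    rewrite rmorphM fmorph_rat rmorphXn; apply: vclosureM => //.
      exact/vclosure_of/int_frac_rat.
    exact: vclosureX.
  rewrite sigma_iota rmorph_sum; apply: congr1; apply: eq_bigr => k _.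
  by rewrite rmorphM fmorph_rat rmorphXn rho_a.
move=> clx; split.
  by apply: (vclosure_idem hv); apply: vclosureW clx => z /Qa_frac[].
by apply: (sigma_fixed_closed hv v_sigma); apply: vclosureW clx => z /Qa_frac[].
Qed.

End Completion.

Theorem mainTheorem7
  (K : fieldType) (a j : K) (rho : {rmorphism K -> K})
  (L : fieldType) (v : L -> int) (iota : {rmorphism K -> L})
  (sigma : {rmorphism L -> L}) :
  (* K = Q(alpha, i) *)
  [pchar K] =i pred0 ->
  [\/ a ^+ 3 - 93 * a + 124 = 0,
      a ^+ 3 - 129 * a - 344 = 0
    | a ^+ 3 - 21 * a - 28 = 0] ->
  j ^+ 2 = -1 ->
  generated_by a j ->
  (* rho = complex conjugation on K *)
  rho a = a -> rho j = - j ->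
  (* (L, v, iota) is the completion K_P of K at a prime P above 2 *)
  is_dval v -> 0 < v 2 -> vcomplete v -> vdense v iota ->
  (* sigma = the continuous extension of rho to K_P *)
  (forall x : K, sigma (iota x) = iota (rho x)) ->
  (forall x : L, x != 0 -> v (sigma x) = v x) ->
  exists chi : L -> algC,
    (* homomorphism O_{K_P}^x -> {+-1, +-i} *)
    (forall x y : L, vunit v x -> vunit v y -> chi (x * y) = chi x * chi y) /\
    (forall x : L, vunit v x -> chi x ^+ 4 = 1) /\
    (* restriction to O_{F_p}^x (F_p = closure of iota(Q(alpha))) is chi_p,
       chi_p(x) = 1 iff x is a norm y * sigma y from K_P^x *)
    (forall x : L, vunit v x -> vclosure v (fun z => exists y : K, in_Qa a y /\ z = iota y) x ->
       ((exists y : L, y != 0 /\ y * sigma y = x) -> chi x = 1) /\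
       (~ (exists y : L, y != 0 /\ y * sigma y = x) -> chi x = -1)) /\
    chi (iota j) = 'i /\
    (forall x : L, vunit v x -> chi (sigma x) = (chi x)^*).
Proof.
move=> charK cubic j2 gen rho_a rho_j hv v2_gt0 complete dense sigma_iota v_sigma.
have charL : [pchar L] =i pred0 by move=> p; rewrite (fmorph_pchar iota) charK.
have J2 := iota_J2 iota j2.
have sigmaJ : sigma (iota j) = - iota j by rewrite sigma_iota rho_j rmorphN.
have A_frac := alpha_vclosure iota hv v2_gt0 charL cubic.
have approx x : vunit v x -> exists M N, vge v (x - gauss (iota j) M N) (2%:Z * v 2).
  exact: vunit_gauss_approx.
exists (gauss_chi v (iota j)); split; [|split; [|split; [|split]]].
- exact: gauss_chiM.
- by move=> x _; apply: gauss_chiX4.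
- move=> x ux /(vclosure_Qa hv charL rho_a sigma_iota v_sigma A_frac) [clx sx].
  have [|M vxM] := integral_int_approx hv v2_gt0 charL J2 (3%:Z * v 2) _ clx.
    by right; rewrite ux.2.
  exact: gauss_chi_fixed ux sx vxM.
- exact: gauss_chiJ.
- exact: gauss_chi_sigma.
Qed.
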